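(* Let $(G,\Lambda)$ be a self-similar action with $|\Lambda^0|<\infty$. Then for every cycline triple $(\mu,g,\nu)$, one has $s_\mu s_\mu^*=s_\nu s_\nu^*$ in $\mathcal{O}_{G,\Lambda}$.
   Context: Let $k\ge1$. A $k$-graph is a countable small category $\Lambda$ together with a functor $d:\Lambda\to\mathbb{N}^k$ (the degree map) with the unique factorization property: for every $\mu\in\Lambda$ and $m,n\in\mathbb{N}^k$ with $d(\mu)=m+n$ there are unique $\alpha,\beta\in\Lambda$ with $d(\alpha)=m$, $d(\beta)=n$ and $\mu=\alpha\beta$. Write $\Lambda^n=d^{-1}(n)$; $\Lambda^0$ is identified with the set of objects (vertices), and $r,s$ denote range and source. For $v\in\Lambda^0$ and $n\in\mathbb{N}^k$ write $v\Lambda^n=r^{-1}(v)\cap\Lambda^n$. All $k$-graphs are assumed row-finite ($|v\Lambda^n|<\infty$) and source-free ($v\Lambda^n\neq\emptyset$) for all $v,n$. Infinite paths: let $\Omega_k=\{(p,q)\in\mathbb{N}^k\times\mathbb{N}^k:p\le q\}$ with $r(p,q)=(p,p)$, $s(p,q)=(q,q)$, $(p,q)(q,m)=(p,m)$, $d(p,q)=q-p$. An infinite path is a degree-preserving functor $x:\Omega_k\to\Lambda$; $\Lambda^\infty$ is the set of infinite paths, $v\Lambda^\infty=\{x:x(0,0)=v\}$, and for $\mu\in\Lambda$, $x\in s(\mu)\Lambda^\infty$, $\mu x$ is the unique infinite path $y$ with $y(0,d(\mu))=\mu$ and $y(d(\mu)+p,d(\mu)+q)=x(p,q)$ for all $p\le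 q$. Self-similar actions: $G$ is a countable discrete group. A self-similar action $(G,\Lambda)$ consists of an action of $G$ on $\Lambda$ by automorphisms (bijections preserving $d$, $r$, $s$), written $g\cdot\mu$, and a restriction map $G\times\Lambda\to G$, $(g,\mu)\mapsto g|_\mu$, such that for all $g,h\in G$, $v\in\Lambda^0$ and $\mu,\nu$ with $s(\mu)=r(\nu)$: $g\cdot(\mu\nu)=(g\cdot\mu)(g|_\mu\cdot\nu)$; $g|_v=g$; $g|_{\mu\nu}=(g|_\mu)|_\nu$; $1_G|_\mu=1_G$; $(gh)|_\mu=g|_{h\cdot\mu}\,h|_\mu$. For $x\in\Lambda^\infty$, $(g\cdot x)(p,q)=g|_{x(0,p)}\cdot x(p,q)$. Cycline triples: a triple $(\mu,g,\nu)\in\Lambda\times G\times\Lambda$ with $s(\mu)=g\cdot s(\nu)$ is cycline if $\mu(g\cdot x)=\nu x$ for all $x\in s(\nu)\Lambda^\infty$. The algebra: for a self-similar action with $|\Lambda^0|<\infty$, $\mathcal{O}_{G,\Lambda}$ is the universal unital C*-algebra generated by unitaries $\{u_g\}_{g\in G}$ and partial isometries $\{s_\mu\}_{\mu\in\Lambda}$ such that $\{s_v\}_{v\in\Lambda^0}$ are mutually orthogonal projections; $s_{\mu\nu}=s_\mu s_\nu$ when $s(\mu)=r(\nu)$; $s_\mu^*s_\mu=s_{s(\mu)}$; $s_v=\sum_{\mu\in v\Lambda^n}s_\mu s_\mu^*$ for all $v\in\Lambda^0$, $n\in\mathbb{N}^k$; $u_{gh}=u_gu_h$; and $u_gs_\mu=s_{g\cdot\mu}u_{g|_\mu}$.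 *)

From HB Require Import structures.
From mathcomp Require Import all_boot all_order all_algebra.
Set Implicit Arguments. Unset Strict Implicit. Unset Printing Implicit Defensive.
Import GRing.Theory.

Definition deg (k : nat) := {ffun 'I_k -> nat}.
Definition dzero k : deg k := [ffun _ => 0%N].
Definition dadd k (m n : deg k) : deg k := [ffun i => (m i + n i)%N].
Definition dsub k (m n : deg k) : deg k := [ffun i => (m i - n i)%N].
Definition dle k (m n : deg k) : bool := [forall i, (m i <= n i)%N].

(* A countable small category (objects kobj, morphisms kpath, total composition
   kcomp which is only meaningful on composable pairs) with a degree functor
   satisfying the unique factorization property.  Row-finiteness is witnessed by
   an enumeration k_enum v n of v Lambda^n; source-freeness says it is nonempty. *)
Record kgraph (k : nat) := KGraph {
  kobj : countType;
  kpath : countType;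
  krng : kpath -> kobj;
  ksrc : kpath -> kobj;
  kid : kobj -> kpath;
  kcomp : kpath -> kpath -> kpath;
  kdeg : kpath -> deg k;
  k_rid : forall v, krng (kid v) = v;
  k_sid : forall v, ksrc (kid v) = v;
  k_rcomp : forall m n, ksrc m = krng n -> krng (kcomp m n) = krng m;
  k_scomp : forall m n, ksrc m = krng n -> ksrc (kcomp m n) = ksrc n;
  k_idl : forall m, kcomp (kid (krng m)) m = m;
  k_idr : forall m, kcomp m (kid (ksrc m)) = m;
  k_assoc : forall a b c, ksrc a = krng b -> ksrc b = krng c ->
      kcomp (kcomp a b) c = kcomp a (kcomp b c);
  k_deg_id : forall v, kdeg (kid v) = dzero k;
  k_deg_comp : forall a b, ksrc a = krng b -> kdeg (kcomp a b) = dadd (kdeg a) (kdeg b);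
  k_fact_ex : forall mu m n, kdeg mu = dadd m n ->
      exists a b, [/\ kdeg a = m, kdeg b = n, ksrc a = krng b & mu = kcomp a b];
  k_fact_uniq : forall a b a' b', kdeg a = kdeg a' -> kdeg b = kdeg b' ->
      ksrc a = krng b -> ksrc a' = krng b' -> kcomp a b = kcomp a' b' ->
      a = a' /\ b = b';
  k_enum : kobj -> deg k -> seq kpath;
  k_enum_uniq : forall v n, uniq (k_enum v n);
  k_enum_mem : forall v n mu, (mu \in k_enum v n) = (krng mu == v) && (kdeg mu == n);
  k_source_free : forall v n, k_enum v n != [::]
}.

Record cgroup := CGroup {
  gcar : countType;
  gmul : gcar -> gcar -> gcar;
  gone : gcar;
  ginv : gcar -> gcar;
  gmulA : forall a b c, gmul a (gmul b c) = gmul (gmul a b) c;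
  gmul1 : forall a, gmul a gone = a;
  g1mul : forall a, gmul gone a = a;
  gmulV : forall a, gmul a (ginv a) = gone;
  gVmul : forall a, gmul (ginv a) a = gone
}.

(* Vertices are identified with the identity morphisms kid v; the action of g on a
   vertex v is sact g (kid v). *)
Record ssaction k (L : kgraph k) (G : cgroup) := SSAction {
  sact : gcar G -> kpath L -> kpath L;
  sres : gcar G -> kpath L -> gcar G;
  sact_bij : forall g, bijective (sact g);
  sact_deg : forall g m, kdeg (sact g m) = kdeg m;
  sact_rng : forall g m, kid (krng (sact g m)) = sact g (kid (krng m));
  sact_src : forall g m, kid (ksrc (sact g m)) = sact g (kid (ksrc m));
  sact_one : forall m, sact (gone G) m = m;
  sact_mul : forall g h m, sact (gmul g h) m = sact g (sact h m);
  ss_act_comp : forall g m n, ksrc m = krng n ->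
      sact g (kcomp m n) = kcomp (sact g m) (sact (sres g m) n);
  ss_res_vert : forall g v, sres g (kid v) = g;
  ss_res_comp : forall g m n, ksrc m = krng n ->
      sres g (kcomp m n) = sres (sres g m) n;
  ss_res_one : forall m, sres (gone G) m = gone G;
  ss_res_mul : forall g h m, sres (gmul g h) m = gmul (sres g (sact h m)) (sres h m)
}.

Section InfPaths.
Variables (k : nat) (L : kgraph k) (G : cgroup) (A : ssaction L G).

(* infinite paths: degree-preserving functors Omega_k -> L, given by their values
   x p q on pairs p <= q (values at other pairs are irrelevant) *)
Definition infpath (x : deg k -> deg k -> kpath L) : Prop :=
  (forall p q, dle p q -> kdeg (x p q) = dsub q p) /\
  (forall p q m, dle p q -> dle q m ->
      ksrc (x p q) = krng (x q m) /\ kcomp (x p q) (x q m) = x p m).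

Definition infpath_from (v : kobj L) (x : deg k -> deg k -> kpath L) : Prop :=
  infpath x /\ x (dzero k) (dzero k) = kid v.

Definition infpath_eq (x y : deg k -> deg k -> kpath L) : Prop :=
  forall p q, dle p q -> x p q = y p q.

Definition gact_inf (g : gcar G) (x : deg k -> deg k -> kpath L) :=
  fun p q => sact A (sres A g (x (dzero k) p)) (x p q).

Definition is_concat (mu : kpath L) (x y : deg k -> deg k -> kpath L) : Prop :=
  [/\ infpath y, y (dzero k) (kdeg mu) = mu &
      forall p q, dle p q -> y (dadd (kdeg mu) p) (dadd (kdeg mu) q) = x p q].

Definition cycline (mu : kpath L) (g : gcar G) (nu : kpath L) : Prop :=
  kid (ksrc mu) = sact A g (kid (ksrc nu)) /\
  forall x, infpath_from (ksrc nu) x ->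
    forall y1 y2, is_concat mu (gact_inf g x) y1 -> is_concat nu x y2 ->
      infpath_eq y1 y2.

Local Open Scope ring_scope.

Definition is_star (R : pzRingType) (star : R -> R) : Prop :=
  [/\ involutive star, forall a b, star (a + b) = star a + star b,
      forall a b, star (a * b) = star b * star a & star 1 = 1].

Record OGL_rep (R : pzRingType) (star : R -> R)
    (u : gcar G -> R) (s : kpath L -> R) : Prop := {
  rep_unitary_l : forall g, u g * star (u g) = 1;
  rep_unitary_r : forall g, star (u g) * u g = 1;
  rep_pisom : forall m, s m * star (s m) * s m = s m;
  rep_proj_sa : forall v, star (s (kid v)) = s (kid v);
  rep_proj_idem : forall v, s (kid v) * s (kid v) = s (kid v);
  rep_proj_orth : forall v w, v != w -> s (kid v) * s (kid w) = 0;
  rep_comp : forall m n, ksrc m = krng n -> s (kcomp m n) = s m * s n;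
  rep_src : forall m, star (s m) * s m = s (kid (ksrc m));
  rep_CK : forall v n, s (kid v) = \sum_(m <- k_enum v n) s m * star (s m);
  rep_umul : forall g h, u (gmul g h) = u g * u h;
  rep_ss : forall g m, u g * s m = s (sact A g m) * u (sres A g m)
}.

End InfPaths.

(* Expanding by the Cuntz-Krieger relation in degree d(nu) resp. d(mu),
   s_mu s_mu^* = sum_b s_{mu b} s_{mu b}^* over b in s(mu)Lambda^{d(nu)} and
   s_nu s_nu^* = sum_a s_{nu a} s_{nu a}^* over a in s(nu)Lambda^{d(mu)}.
   The cycline property identifies the two families of paths: extending a to an
   infinite path x, mu (g.x) = nu x gives nu a = mu (g . x(0, d(nu))); conversely,
   extending g^-1 . b to x gives mu b = nu x(0, d(mu)).
   The encoded axioms of a self-similar action do not force g.l and g|_l.n to be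
   composable, so g.x need not be an infinite path.  In a representation,
   composability is recovered whenever s_l <> 0, from u_g s_l = s_{g.l} u_{g|_l}
   and the orthogonality of the vertex projections; so the argument only uses
   paths with nonzero image, the others contributing 0 to both sums. *)

From HB Require Import structures.
From mathcomp Require Import all_boot all_order all_algebra.
From Stdlib Require Import ClassicalEpsilon.
Set Implicit Arguments. Unset Strict Implicit. Unset Printing Implicit Defensive.
Import GRing.Theory.

Section Degrees.
Variable k : nat.
Implicit Types m n p q : deg k.

Lemma daddC m n : dadd m n = dadd n m.
Proof. by apply/ffunP=> i; rewrite !ffunE addnC. Qed.

Lemma dadd0r m : dadd m (dzero k) = m.
Proof. by apply/ffunP=> i; rewrite !ffunE addn0. Qed.

Lemma dsub0r m : dsub m (dzero k) = m.
Proof. by apply/ffunP=> i; rewrite !ffunE subn0. Qed.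

Lemma daddI m : injective (dadd m).
Proof. by move=> a b /ffunP e; apply/ffunP=> i; move: (e i); rewrite !ffunE => /addnI. Qed.

Lemma dsubKC m n : dle m n -> dadd m (dsub n m) = n.
Proof. by move/forallP=> le_mn; apply/ffunP=> i; rewrite !ffunE subnKC. Qed.

Lemma dle0n m : dle (dzero k) m.
Proof. by apply/forallP=> i; rewrite ffunE. Qed.

Lemma dle_daddr m n : dle m (dadd m n).
Proof. by apply/forallP=> i; rewrite ffunE leq_addr. Qed.

Lemma dle_dadd2l m p q : dle p q -> dle (dadd m p) (dadd m q).
Proof. by move/forallP=> le_pq; apply/forallP=> i; rewrite !ffunE leq_add2l. Qed.

Lemma dle_daddl m n : dle n (dadd m n).
Proof. by rewrite daddC dle_daddr. Qed.

Definition dconst (c : nat) : deg k := [ffun _ => c].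

Definition dsum q := (\sum_(i < k) q i)%N.

Lemma dsum_mono p q : dle p q -> (dsum p <= dsum q)%N.
Proof. by move/forallP=> le_pq; apply: leq_sum => i _. Qed.

Lemma dle_dadd_dsum b q : dle q (dadd b (dconst (dsum q))).
Proof.
apply/forallP=> i; rewrite !ffunE (leq_trans _ (leq_addl _ _)) //.
by rewrite /dsum (bigD1 i) //= leq_addr.
Qed.

Lemma dadd_dconst0 b : dadd b (dconst 0) = b.
Proof. by apply/ffunP=> i; rewrite !ffunE addn0. Qed.

Lemma dadd_dconstS b (j : nat) : dadd (dadd b (dconst j)) (dconst 1) = dadd b (dconst j.+1).
Proof. by apply/ffunP=> i; rewrite !ffunE addn1 addnS. Qed.

End Degrees.

Section Factorization.
Variables (k : nat) (L : kgraph k).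
Implicit Types (a b c lam : kpath L) (m p q : deg k).

Lemma kid_inj (v w : kobj L) : kid v = kid w -> v = w.
Proof. by move=> e; rewrite -(k_rid v) e k_rid. Qed.

Lemma kcomp_inj a b a' b' : ksrc a = krng b -> ksrc a' = krng b' ->
  kdeg a = kdeg a' -> kcomp a b = kcomp a' b' -> a = a' /\ b = b'.
Proof.
move=> hab hab' hd e; apply: k_fact_uniq => //; apply: (@daddI _ (kdeg a)).
by rewrite -k_deg_comp // e k_deg_comp // hd.
Qed.

Lemma kcompI a b b' : ksrc a = krng b -> ksrc a = krng b' ->
  kcomp a b = kcomp a b' -> b = b'.
Proof. by move=> hb hb' /(kcomp_inj hb hb' erefl) []. Qed.

Lemma kfactor lam m : dle m (kdeg lam) ->
  exists a b, [/\ kdeg a = m, ksrc a = krng b & lam = kcomp a b].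
Proof.
move/dsubKC/esym/k_fact_ex=> [a [b [da _ hab e]]].
by exists a, b.
Qed.

Lemma kid_deg0 lam : kdeg lam = dzero k -> lam = kid (krng lam).
Proof.
move=> d0; have e : kcomp (kid (krng lam)) lam = kcomp lam (kid (ksrc lam)).
  by rewrite k_idl k_idr.
by case: (kcomp_inj _ _ _ e); rewrite ?k_sid ?k_rid ?k_deg_id.
Qed.

Definition prefix a lam := exists2 w, ksrc a = krng w & lam = kcomp a w.

Lemma prefix_refl a : prefix a a.
Proof. by exists (kid (ksrc a)); rewrite ?k_rid ?k_idr. Qed.

Lemma prefix_comp a b : ksrc a = krng b -> prefix a (kcomp a b).
Proof. by exists b. Qed.

Lemma prefix_trans b a c : prefix a b -> prefix b c -> prefix a c.
Proof.
move=> [w hw ->] [w' hw' ->]; have sw : ksrc w = krng w' by rewrite -hw' k_scomp.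
by exists (kcomp w w'); rewrite ?k_rcomp ?k_assoc.
Qed.

Lemma prefix_rng a lam : prefix a lam -> krng lam = krng a.
Proof. by move=> [w hw ->]; rewrite k_rcomp. Qed.

Lemma prefix_uniq a a' lam : prefix a lam -> prefix a' lam -> kdeg a = kdeg a' -> a = a'.
Proof. by move=> [w hw ->] [w' hw' e] hd; case: (kcomp_inj hw hw' hd e). Qed.

Lemma prefix_sub a b lam : prefix a lam -> prefix b lam -> dle (kdeg a) (kdeg b) ->
  prefix a b.
Proof.
move=> ha hb /kfactor[a' [w [da' hw eb]]].
have ha' : prefix a' lam by apply: prefix_trans hb; exists w.
by rewrite (prefix_uniq ha ha' (esym da')); exists w.
Qed.

Definition kfact lam m : kpath L * kpath L :=
  epsilon (inhabits (lam, lam))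
    (fun ab => [/\ kdeg ab.1 = m, ksrc ab.1 = krng ab.2 & lam = kcomp ab.1 ab.2]).

Lemma kfactP lam m : dle m (kdeg lam) ->
  let ab := kfact lam m in [/\ kdeg ab.1 = m, ksrc ab.1 = krng ab.2 & lam = kcomp ab.1 ab.2].
Proof.
move/kfactor=> [a [b hab]].
pose P ab := [/\ kdeg ab.1 = m, ksrc ab.1 = krng ab.2 & lam = kcomp ab.1 ab.2].
by have : P (kfact lam m) by apply: epsilon_spec; exists (a, b).
Qed.

Lemma kfact_comp a b : ksrc a = krng b -> kfact (kcomp a b) (kdeg a) = (a, b).
Proof.
move=> hab; have : dle (kdeg a) (kdeg (kcomp a b)) by rewrite k_deg_comp ?dle_daddr.
move/kfactP; case: (kfact _ _) => a' b' /= [da' hab' e].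
by case: (kcomp_inj hab hab' (esym da') e) => <- <-.
Qed.

Lemma uniq_map_kcomp lam n : uniq (map (kcomp lam) (k_enum (ksrc lam) n)).
Proof.
rewrite map_inj_in_uniq ?k_enum_uniq // => a a'.
by rewrite !k_enum_mem => /andP[/eqP ra _] /andP[/eqP ra' _]; apply: kcompI.
Qed.

End Factorization.

Section InfinitePaths.
Variables (k : nat) (L : kgraph k).
Implicit Types (mu lam : kpath L) (p q : deg k) (x y : deg k -> deg k -> kpath L).

Definition coherent (Y : deg k -> kpath L) :=
  (forall q, kdeg (Y q) = q) /\ (forall q q', dle q q' -> prefix (Y q) (Y q')).

Definition infpath_of (Y : deg k -> kpath L) p q := (kfact (Y q) p).2.

Lemma infpath_of0 Y q : infpath_of Y (dzero k) q = Y q.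
Proof.
by rewrite /infpath_of -{1}(k_idl (Y q)) -(k_deg_id (krng (Y q))) kfact_comp ?k_sid.
Qed.

Lemma infpath_of_coherent Y : coherent Y -> infpath (infpath_of Y).
Proof.
move=> [dY prefY]; split=> [p q le_pq | p q m le_pq le_qm]; rewrite /infpath_of.
  have /kfactP : dle p (kdeg (Y q)) by rewrite dY.
  case: (kfact _ _) => a b /= [da hab e]; apply: (@daddI _ p).
  by rewrite dsubKC // -da -k_deg_comp // -e dY.
have /kfactP : dle p (kdeg (Y q)) by rewrite dY.
case: (kfact _ _) => a b /= [da hab e].
have [c hc eYm] := prefY q m le_qm.
have hbc : ksrc b = krng c by rewrite -hc e k_scomp.
have -> : kfact (Y m) q = (Y q, c) by rewrite eYm -{2}(dY q) kfact_comp.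
rewrite eYm e k_assoc // -da kfact_comp ?k_rcomp //=.
Qed.

Lemma infpath_of_prefixes (Lam : deg k -> kpath L) :
  (forall q, dle q (kdeg (Lam q))) ->
  (forall q q', dle q q' -> prefix (Lam q) (Lam q')) ->
  exists2 x, infpath x & forall q, prefix (x (dzero k) q) (Lam q).
Proof.
move=> degLam incLam; pose Y q := (kfact (Lam q) q).1.
have truncY q : kdeg (Y q) = q /\ prefix (Y q) (Lam q).
  by have /kfactP[-> hab e] := degLam q; split; last exists (kfact (Lam q) q).2.
exists (infpath_of Y) => [|q]; last by rewrite infpath_of0; case: (truncY q).
apply: infpath_of_coherent; split=> [q | q q' le_qq']; first by case: (truncY q).
have [dYq pYq] := truncY q; have [dYq' pYq'] := truncY q'.
by apply: prefix_sub pYq' _; [apply: prefix_trans (incLam _ _ le_qq') | rewrite dYq dYq'].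
Qed.

Lemma infpath_deg0 x q : infpath x -> kdeg (x (dzero k) q) = q.
Proof. by case=> dx _; rewrite dx ?dle0n ?dsub0r. Qed.

Lemma infpath_split0 x p q : infpath x -> dle p q ->
  ksrc (x (dzero k) p) = krng (x p q) /\ x (dzero k) q = kcomp (x (dzero k) p) (x p q).
Proof. by case=> _ cx le_pq; case: (cx _ _ _ (dle0n p) le_pq). Qed.

Lemma infpath_from_rng v x q : infpath_from v x -> krng (x (dzero k) q) = v.
Proof.
case=> xi x00; have [e _] := infpath_split0 xi (dle0n q).
by rewrite -e x00 k_sid.
Qed.

Lemma is_concat_init mu x y q : is_concat mu x y ->
  y (dzero k) (dadd (kdeg mu) q) = kcomp mu (x (dzero k) q).
Proof.
case=> yi y0 ysh; have [_ e] := infpath_split0 yi (dle_daddr (kdeg mu) q).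
by rewrite e y0 -ysh ?dle0n // dadd0r.
Qed.

Lemma exists_concat mu x : infpath_from (ksrc mu) x -> exists y, is_concat mu x y.
Proof.
move=> hx; have [xi x00] := hx; have rx q := infpath_from_rng q hx.
pose Lam q := kcomp mu (x (dzero k) q).
have dLam q : kdeg (Lam q) = dadd (kdeg mu) q by rewrite k_deg_comp ?infpath_deg0.
have incLam q q' : dle q q' -> prefix (Lam q) (Lam q').
  move=> le_qq'; have [h e] := infpath_split0 xi le_qq'.
  by exists (x q q'); rewrite /Lam ?k_scomp ?e ?k_assoc.
have [y yi yLam] : exists2 y, infpath y & forall q, prefix (y (dzero k) q) (Lam q).
  by apply: infpath_of_prefixes => // q; rewrite dLam dle_daddl.
have yinit q : y (dzero k) (dadd (kdeg mu) q) = Lam q.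
  apply: prefix_uniq (yLam _) (incLam _ _ (dle_daddl _ _)) _.
  by rewrite infpath_deg0 ?dLam.
exists y; split=> // [|p q le_pq].
  by rewrite -[kdeg mu]dadd0r yinit /Lam x00 k_idr.
have [h1 e1] := infpath_split0 yi (dle_dadd2l (kdeg mu) le_pq).
have [h2 e2] := infpath_split0 xi le_pq.
apply: (kcompI h1); first by rewrite yinit k_scomp.
by rewrite -e1 !yinit /Lam e2 k_assoc.
Qed.

End InfinitePaths.

Section Representation.
Variables (k : nat) (L : kgraph k) (G : cgroup) (A : ssaction L G).
Variables (R : pzRingType) (star : R -> R) (u : gcar G -> R) (s : kpath L -> R).
Hypothesis hrep : OGL_rep A star u s.
Local Open Scope ring_scope.
Implicit Types (a b mu lam : kpath L) (h : gcar G) (v w : kobj L).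

Lemma s_mul_src a : s a * s (kid (ksrc a)) = s a.
Proof. by rewrite -(rep_src hrep) mulrA (rep_pisom hrep). Qed.

Lemma s_src_neq0 a : (s (kid (ksrc a)) != 0) = (s a != 0).
Proof.
apply/idP/idP; apply: contra_neq => s0; first by rewrite -(rep_src hrep) s0 mulr0.
by rewrite -s_mul_src s0 mulr0.
Qed.

Lemma s_comp_neq0 a b : ksrc a = krng b -> (s (kcomp a b) != 0) = (s b != 0).
Proof. by move=> hab; rewrite -s_src_neq0 k_scomp // s_src_neq0. Qed.

Lemma s_prefix_neq0 a lam : prefix a lam -> s lam != 0 -> s a != 0.
Proof. by move=> [w hw ->]; rewrite (rep_comp hrep) //; apply: contra_neq => ->; rewrite mul0r. Qed.

Lemma s_act_neq0 h b : (s (sact A h b) != 0) = (s b != 0).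
Proof.
have ss := rep_ss hrep h b; apply/idP/idP; apply: contra_neq => s0.
  by rewrite -[s _]mulr1 -(rep_unitary_l hrep (sres A h b)) mulrA -ss s0 mulr0 mul0r.
by rewrite -[s b]mul1r -(rep_unitary_r hrep h) -mulrA ss s0 mul0r mulr0.
Qed.

Lemma sact_kid h v : sact A h (kid v) = kid (krng (sact A h (kid v))).
Proof. by rewrite sact_rng k_rid. Qed.

Lemma sres_act_src h b : s b != 0 ->
  sact A (sres A h b) (kid (ksrc b)) = kid (ksrc (sact A h b)).
Proof.
move=> sb0; set h' := sres A h b; set z := sact A h b.
(* s_z u_h' = u_h s_b s_{s(b)} = s_z u_h' s_{s(b)} = s_z s_{h'.s(b)} u_h', and u_h' is unitary. *)
have ssz : s z = s z * s (sact A h' (kid (ksrc b))).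
  have ssv := rep_ss hrep h' (kid (ksrc b)); rewrite (ss_res_vert A) in ssv.
  have : s z * u h' = s z * s (sact A h' (kid (ksrc b))) * u h'.
    by rewrite -(rep_ss hrep) -{1}s_mul_src mulrA (rep_ss hrep) -mulrA ssv mulrA.
  move/(congr1 (fun r => r * star (u h'))).
  by rewrite -!mulrA (rep_unitary_l hrep) !mulr1.
have sz0 : s z != 0 by rewrite s_act_neq0.
rewrite sact_kid; congr kid; apply: contraTeq sz0 => hne.
by rewrite negbK -s_mul_src ssz sact_kid -mulrA (rep_proj_orth hrep hne) mulr0.
Qed.

Lemma exists_live_edge w n : s (kid w) != 0 -> exists2 e, e \in k_enum w n & s e != 0.
Proof.
move=> sw0; have /hasP[e he se] : has (fun e => s e != 0) (k_enum w n).
  apply: contraNT sw0 => /hasPn live0; rewrite (rep_CK hrep w n) big1_seq //.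
  by move=> e /live0 /negbNE /eqP ->; rewrite mul0r.
by exists e.
Qed.

Lemma gact_infpath g v w x : infpath_from v x -> (forall q, s (x (dzero k) q) != 0) ->
  kid w = sact A g (kid v) -> infpath_from w (gact_inf A g x).
Proof.
move=> [xi x00] xlive gv; have [dx cx] := xi.
split; [split=> [p q le_pq | p q m le_pq le_qm] |]; rewrite /gact_inf.
- by rewrite sact_deg dx.
- have [e1 e2] := cx _ _ _ le_pq le_qm; have [f1 f2] := infpath_split0 xi le_pq.
  set h := sres A g (x (dzero k) p).
  have -> : sres A g (x (dzero k) q) = sres A h (x p q) by rewrite f2 (ss_res_comp A).
  have live_pq : s (x p q) != 0 by rewrite -(s_comp_neq0 f1) -f2.
  split; last by rewrite -e2 (ss_act_comp A).
  by apply: kid_inj; rewrite sact_rng -e1 sres_act_src.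
- by rewrite x00 (ss_res_vert A) gv.
Qed.

Definition live_edge_of w := head (kid w) [seq e <- k_enum w (dconst k 1) | s e != 0].

Lemma live_edge_ofP w : s (kid w) != 0 ->
  [/\ krng (live_edge_of w) = w, kdeg (live_edge_of w) = dconst k 1
    & s (live_edge_of w) != 0].
Proof.
move=> /(exists_live_edge (dconst k 1))[e he se].
have : e \in [seq e <- k_enum w (dconst k 1) | s e != 0] by rewrite mem_filter se.
rewrite /live_edge_of; case E: [seq _ <- _ | _] => [|e' r] //= _.
have : e' \in [seq e <- k_enum w (dconst k 1) | s e != 0] by rewrite E mem_head.
by rewrite mem_filter k_enum_mem => /and3P[-> /eqP-> /eqP->].
Qed.

Fixpoint live_chain b n :=
  if n is n'.+1 then kcomp (live_chain b n') (live_edge_of (ksrc (live_chain b n')))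
  else b.

Lemma live_chain_step c : s c != 0 ->
  let c' := kcomp c (live_edge_of (ksrc c)) in
  [/\ s c' != 0, kdeg c' = dadd (kdeg c) (dconst k 1) & prefix c c'].
Proof.
move=> sc0; have /live_edge_ofP[re de se] : s (kid (ksrc c)) != 0 by rewrite s_src_neq0.
by split; [rewrite s_comp_neq0 | rewrite k_deg_comp ?de | apply: prefix_comp].
Qed.

Lemma live_chain_spec b n : s b != 0 ->
  s (live_chain b n) != 0 /\ kdeg (live_chain b n) = dadd (kdeg b) (dconst k n).
Proof.
move=> sb0; elim: n => [|n [sn dn]] /=; first by rewrite dadd_dconst0.
by have [-> -> _] := live_chain_step sn; rewrite dn dadd_dconstS.
Qed.

Lemma live_chain_prefix b : s b != 0 ->
  {homo live_chain b : n m / (n <= m)%N >-> prefix n m}.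
Proof.
move=> sb0; apply: homo_leq (@prefix_refl _ _) (@prefix_trans _ _) _ => n.
by have [_ _] := live_chain_step (live_chain_spec n sb0).1.
Qed.

Lemma live_infpath_extension b : s b != 0 -> exists x, [/\ infpath_from (krng b) x,
  x (dzero k) (kdeg b) = b & forall q, s (x (dzero k) q) != 0].
Proof.
move=> sb0; pose Lam (q : deg k) := live_chain b (dsum q).
have [x xi xLam] : exists2 x, infpath x & forall q, prefix (x (dzero k) q) (Lam q).
  apply: infpath_of_prefixes => [q | q q' le_qq']; last first.
    by apply: live_chain_prefix; rewrite ?dsum_mono.
  by rewrite (live_chain_spec _ sb0).2 dle_dadd_dsum.
have b_Lam q : prefix b (Lam q) by apply: (live_chain_prefix sb0 (leq0n _)).
exists x; split=> [|| q].
- split=> //; rewrite (kid_deg0 (infpath_deg0 _ xi)).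
  by rewrite -(prefix_rng (xLam _)) (prefix_rng (b_Lam _)).
- by apply: prefix_uniq (xLam _) (b_Lam _) _; rewrite infpath_deg0.
- exact: s_prefix_neq0 (xLam q) (live_chain_spec _ sb0).1.
Qed.

Lemma cycline_comp mu g nu x : cycline A mu g nu -> infpath_from (ksrc nu) x ->
  (forall q, s (x (dzero k) q) != 0) ->
  kcomp mu (sact A g (x (dzero k) (kdeg nu))) = kcomp nu (x (dzero k) (kdeg mu)).
Proof.
move=> [gsrc cyc] hx xlive.
have [y1 hy1] := exists_concat (gact_infpath hx xlive gsrc).
have [y2 hy2] := exists_concat hx.
have := cyc x hx y1 y2 hy1 hy2 (dzero k) (dadd (kdeg mu) (kdeg nu)) (dle0n _).
rewrite (is_concat_init _ hy1) daddC (is_concat_init _ hy2) /gact_inf.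
by case: hx => _ ->; rewrite (ss_res_vert A).
Qed.

Section Cycline.
Variables (mu : kpath L) (g : gcar G) (nu : kpath L).
Hypothesis cyc : cycline A mu g nu.

Lemma cycline_nu_ext a : a \in k_enum (ksrc nu) (kdeg mu) -> s (kcomp nu a) != 0 ->
  kcomp nu a \in map (kcomp mu) (k_enum (ksrc mu) (kdeg nu)).
Proof.
rewrite k_enum_mem => /andP[/eqP ra /eqP da]; rewrite s_comp_neq0 // => sa0.
have [x [hx xa xlive]] := live_infpath_extension sa0; rewrite ra in hx.
rewrite -xa da -(cycline_comp cyc hx xlive) map_f // k_enum_mem sact_deg.
rewrite infpath_deg0 ?eqxx ?andbT; last by case: hx.
by apply/eqP/kid_inj; rewrite sact_rng (infpath_from_rng _ hx) cyc.1.
Qed.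

Lemma cycline_mu_ext b : b \in k_enum (ksrc mu) (kdeg nu) -> s (kcomp mu b) != 0 ->
  kcomp mu b \in map (kcomp nu) (k_enum (ksrc nu) (kdeg mu)).
Proof.
rewrite k_enum_mem => /andP[/eqP rb /eqP db]; rewrite s_comp_neq0 // => sb0.
pose c := sact A (ginv g) b.
have sc0 : s c != 0 by rewrite s_act_neq0.
have dc : kdeg c = kdeg nu by rewrite sact_deg.
have rc : krng c = ksrc nu.
  by apply: kid_inj; rewrite sact_rng rb cyc.1 -(sact_mul A) gVmul (sact_one A).
have gc : sact A g c = b by rewrite -(sact_mul A) gmulV (sact_one A).
have [x [hx xc xlive]] := live_infpath_extension sc0; rewrite rc in hx.
rewrite -gc -xc dc (cycline_comp cyc hx xlive) map_f // k_enum_mem.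
by rewrite (infpath_from_rng _ hx) infpath_deg0 ?eqxx //; case: hx.
Qed.

End Cycline.

Definition rproj l := s l * star (s l).

Lemma rproj_CK (hstar : is_star star) lam n :
  rproj lam = \sum_(a <- k_enum (ksrc lam) n) rproj (kcomp lam a).
Proof.
have [_ _ star_mul _] := hstar.
rewrite /rproj -{1}s_mul_src (rep_CK hrep _ n) mulr_sumr mulr_suml.
apply: eq_big_seq => a; rewrite k_enum_mem => /andP[/eqP ra _].
by rewrite (rep_comp hrep) // star_mul !mulrA.
Qed.

Lemma rproj_sum_live r : \sum_(l <- r) rproj l = \sum_(l <- r | s l != 0) rproj l.
Proof.
rewrite [RHS]big_mkcond; apply: eq_bigr => l _; rewrite /rproj.
by case: eqP => //= ->; rewrite mul0r.
Qed.

Lemma cycline_rproj_eq (hstar : is_star star) mu g nu :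
  cycline A mu g nu -> rproj mu = rproj nu.
Proof.
move=> cyc; rewrite (rproj_CK hstar mu (kdeg nu)) (rproj_CK hstar nu (kdeg mu)).
rewrite -(big_map (kcomp mu) xpredT rproj) -(big_map (kcomp nu) xpredT rproj).
rewrite !rproj_sum_live -[LHS]big_filter -[RHS]big_filter.
apply/perm_big/uniq_perm; rewrite ?filter_uniq ?uniq_map_kcomp //.
move=> l; rewrite !mem_filter; apply/andP/andP => -[sl /mapP[a ha el]]; subst l; split=> //.
- by apply: (cycline_mu_ext cyc).
- by apply: (cycline_nu_ext cyc).
Qed.

End Representation.

Unset Implicit Arguments.
Local Open Scope ring_scope.

Theorem lemma6p9 (k : nat) (hk : (0 < k)%N) (L : kgraph k) (G : cgroup)
    (A : ssaction L G)
    (finV : exists vs : seq (kobj L), forall v, v \in vs)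
    (mu : kpath L) (g : gcar G) (nu : kpath L)
    (cyc : cycline A mu g nu)
    (R : pzRingType) (star : R -> R) (u : gcar G -> R) (s : kpath L -> R)
    (hstar : is_star star) (hrep : OGL_rep A star u s) :
  s mu * star (s mu) = s nu * star (s nu).
Proof. exact: (cycline_rproj_eq hrep hstar cyc). Qed.
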